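(* Consider the early contracting game with fully informative grading in which every school has student abilities uniformly distributed on $[0,1]$. At any equilibrium, the set of jobs that contract early is an interval of job qualities $[b,c]$, and the set of abilities that these jobs receive under the truthful mapping $Q_T$ is an interval $[a,1-a]$ symmetric around $1/2$.
   Context: Students form a continuum of unit mass; every school (a continuum of infinitesimal schools) has student abilities uniformly distributed on $[0,1]$, so every school has average ability $1/2$. Jobs form a continuum of unit mass with qualities in $[0,1]$, continuous CDF $\mu$ with positive density. $Q_T$ is the nondecreasing assortative map: students with ability at most $a$ get exactly the jobs of quality at most $Q_T(a)$. Grading is fully informative (each student's label is their true ability). Agents are risk neutral. Early contracting game: in stage 1 a job may contract with a uniformly random student of a school (expected ability $1/2$); in stage 2 remaining students are matched to remaining jobs assortatively by true ability, via an increasing map $\hat Q$. Equilibrium: (1) a stage-1 contract between a school of average $\hat a$ and job $q$ requires $\hat Q^{-1}(q)\le\hat a$ and that the school's remaining students' average stage-2 quality be at most $q$; (2) there is no school of average $\hat a$ with stage-2 students and job $q$ with $\hat Q^{-1}(q)<\hat a$ such that the school's average stage-2 quality is below $q$; (3) among stage-1 jobs, better jobs go to schools of no lower average ability. *)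

From Stdlib Require Import Reals.
Open Scope R_scope.

Definition is_job_cdf (mu : R -> R) : Prop :=
  (forall q, q <= 0 -> mu q = 0) /\
  (forall q, 1 <= q -> mu q = 1) /\
  continuity mu /\
  exists dens : R -> R,
    forall q, 0 < q < 1 -> derivable_pt_lim mu q (dens q) /\ 0 < dens q.

(* Truthful assortative map Q_T: students with ability <= a (mass a) get
   exactly the jobs of quality <= Q_T a (mass mu (Q_T a)). *)
Definition truthful_map (mu QT : R -> R) : Prop :=
  forall a, 0 <= a <= 1 -> 0 <= QT a <= 1 /\ mu (QT a) = a.

(* G q = mass of the jobs of quality <= q that contract early (stage 1).
   Early jobs are a sub-population of all jobs. *)
Definition early_mass_profile (mu G : R -> R) : Prop :=
  G 0 = 0 /\ forall x y, x <= y -> 0 <= G y - G x <= mu y - mu x.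

Definition early_mass (G : R -> R) : R := G 1.

(* Each school has abilities uniform on [0,1], average ability 1/2. *)
Definition school_avg : R := 1 / 2.

(* Stage 2: remaining students (mass 1 - m, abilities still uniform on [0,1]
   since early students are drawn uniformly at random) matched assortatively
   by true ability to the remaining jobs via an increasing map Qhat:
   students with ability <= a get exactly the remaining jobs of quality
   <= Qhat a. *)
Definition stage2_map (mu G Qhat : R -> R) : Prop :=
  (forall a, 0 <= a <= 1 ->
     0 <= Qhat a <= 1 /\ mu (Qhat a) - G (Qhat a) = (1 - early_mass G) * a) /\
  (forall a a', 0 <= a -> a < a' -> a' <= 1 -> Qhat a < Qhat a').

(* Qhat^{-1}(q): the stage-2 ability rank of quality q, i.e. the fraction of
   remaining (stage-2) jobs of quality <= q. For stage-2 jobs this is the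
   ability of the student matched to q; in general it is the generalized
   inverse of Qhat. *)
Definition Qhat_inv (mu G : R -> R) (q : R) : R :=
  (mu q - G q) / (1 - early_mass G).

(* Job quality q contracts early: q is in the support of the early-job
   distribution. *)
Definition contracts_early (G : R -> R) (q : R) : Prop :=
  forall eps, 0 < eps -> G (q - eps) < G (q + eps).

(* Equilibrium of the early contracting game; v is the average stage-2
   quality of a school's remaining students (= integral of Qhat over [0,1]).
   All schools have the same average 1/2, so condition (3) is vacuous. *)
Definition is_equilibrium (mu G Qhat : R -> R) (v : R) : Prop :=
  stage2_map mu G Qhat /\
  (forall q, contracts_early G q ->
     Qhat_inv mu G q <= school_avg /\ v <= q) /\
  (* (2): some school has stage-2 students iff early_mass G < 1 *)
  (early_mass G < 1 ->
     forall q, 0 <= q <= 1 -> ~ (Qhat_inv mu G q < school_avg /\ v < q)).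

(* With m the early mass and a = (1 - m)/2, let b = Q_T(a) and c = Q_T(1 - a),
   so that the stage-2 rank (mu - G)/(1 - m) crosses 1/2 between b and c.
   If some early mass lay below b, an early job q < b would satisfy v <= q by
   condition (1), and a quality just below b, ranked below 1/2 yet above v,
   would violate condition (2).  If some early mass lay above c, an early job
   q >= c would have rank above 1/2, contradicting condition (1).  Hence the
   early mass m sits in [b, c], whose total job mass is also m, so every job
   of quality in [b, c] contracts early. *)

From Stdlib Require Import Reals Lra Classical.
Open Scope R_scope.

Lemma contracts_early_between (G : R -> R)
  (Gmono : forall x y, x <= y -> G x <= G y) (x y : R) :
  x <= y -> G x < G y -> exists q, x <= q <= y /\ contracts_early G q.
Proof.
  intros Hxy HGxy.
  (* q is the last point of [x, y] where G has not yet grown above G x. *)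
  set (E := fun t => x <= t <= y /\ G t <= G x).
  assert (Ebound : bound E) by (exists y; intros t [Ht _]; lra).
  assert (Ex : E x) by (unfold E; lra).
  destruct (completeness E Ebound (ex_intro _ x Ex)) as [q [qub qlub]].
  assert (xq : x <= q) by (apply qub; exact Ex).
  assert (qy : q <= y) by (apply qlub; intros t [Ht _]; lra).
  exists q; split; [lra |].
  intros eps Heps.
  assert (left_low : G (q - eps) <= G x).
  { destruct (classic (exists t, E t /\ q - eps < t)) as [[t [[_ Gt] lt_t]] | none].
    - apply Rle_trans with (G t); [apply Gmono; lra | exact Gt].
    - assert (q <= q - eps); [| lra].
      apply qlub; intros t Et.
      apply Rnot_lt_le; intro lt_t; apply none; exists t; auto. }
  assert (right_high : G x < G (q + eps)).
  { destruct (Rle_dec (q + eps) y) as [le_y | gt_y].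
    - apply Rnot_le_lt; intro Gle.
      assert (q + eps <= q) by (apply qub; unfold E; lra).
      lra.
    - apply Rlt_le_trans with (G y); [exact HGxy | apply Gmono; lra]. }
  lra.
Qed.

Lemma continuity_pt_left_close {f : R -> R} {x eps : R} :
  continuity_pt f x -> 0 < eps -> exists y, y < x /\ f x - f y < eps.
Proof.
  intros Hf Heps.
  destruct (Hf eps Heps) as [d [Hd close]].
  exists (x - d / 2); split; [lra |].
  assert (Hy : Rabs (f (x - d / 2) - f x) < eps).
  { apply close; split.
    - split; [exact I | lra].
    - simpl; unfold R_dist; rewrite Rabs_left; lra. }
  apply Rabs_def2 in Hy; lra.
Qed.

Section EarlyProfile.

Context {mu G : R -> R}.
Hypothesis HG : early_mass_profile mu G.

Lemma early_profile_gap {x y : R} : x <= y -> 0 <= G y - G x <= mu y - mu x.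
Proof. exact (proj2 HG x y). Qed.

Lemma early_profile_mono {x y : R} : x <= y -> G x <= G y.
Proof. intro Hxy; generalize (early_profile_gap Hxy); lra. Qed.

Lemma early_profile_nonneg (mu0 : forall q, q <= 0 -> mu q = 0) (q : R) :
  0 <= G q.
Proof.
  destruct HG as [G0 _].
  destruct (Rle_dec 0 q) as [q_pos | q_neg].
  - generalize (early_profile_mono q_pos); lra.
  - generalize (early_profile_gap (x := q) (y := 0)).
    rewrite (mu0 q), (mu0 0); lra.
Qed.

Lemma early_profile_saturated (mu1 : forall q, 1 <= q -> mu q = 1) (q : R) :
  1 <= q -> G q = early_mass G.
Proof.
  intro Hq; unfold early_mass.
  generalize (early_profile_gap Hq); rewrite (mu1 q), (mu1 1); lra.
Qed.

(* Squeezing: on [b, c] the early jobs already use up all the jobs. *)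
Lemma early_profile_interval (mu0 : forall q, q <= 0 -> mu q = 0)
  (mu1 : forall q, 1 <= q -> mu q = 1) (b c : R) :
  b <= c -> G b = 0 -> G c = early_mass G -> mu c - mu b = early_mass G ->
  forall q, G q = mu (Rmax b (Rmin q c)) - mu b.
Proof.
  intros bc Gb Gc mbc q.
  destruct (Rle_dec q b) as [qb | bq].
  - rewrite Rmin_left, Rmax_left by lra.
    generalize (early_profile_mono qb) (early_profile_nonneg mu0 q); lra.
  - destruct (Rle_dec q c) as [qc | cq].
    + rewrite Rmin_left, Rmax_right by lra.
      assert (bq' : b <= q) by lra.
      generalize (early_profile_gap bq') (early_profile_gap qc); lra.
    + rewrite Rmin_right, Rmax_right by lra.
      destruct (Rle_dec q 1) as [q1 | q1].
      * assert (cq' : c <= q) by lra.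
        generalize (early_profile_mono cq') (early_profile_mono q1).
        unfold early_mass in *; lra.
      * rewrite (early_profile_saturated mu1 q) by lra; lra.
Qed.

End EarlyProfile.

Lemma Qhat_inv_mul (mu G : R -> R) (q : R) :
  early_mass G < 1 -> Qhat_inv mu G q * (1 - early_mass G) = mu q - G q.
Proof. intro Hm; unfold Qhat_inv; field; lra. Qed.

Section Equilibrium.

Context {mu G Qhat : R -> R} {v : R}.
Hypothesis Hmu : is_job_cdf mu.
Hypothesis HG : early_mass_profile mu G.
Hypothesis Heq : is_equilibrium mu G Qhat v.

Let mu0 : forall q, q <= 0 -> mu q = 0 := proj1 Hmu.
Let mu1 : forall q, 1 <= q -> mu q = 1 := proj1 (proj2 Hmu).
Let mu_cont : continuity mu := proj1 (proj2 (proj2 Hmu)).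

Lemma early_mass_le1 : early_mass G <= 1.
Proof.
  unfold early_mass.
  assert (le01 : 0 <= 1) by lra.
  generalize (early_profile_gap HG le01).
  destruct HG as [G0 _]; rewrite (mu0 0), (mu1 1); lra.
Qed.

Lemma no_early_below (b : R) :
  0 <= b <= 1 -> mu b = (1 - early_mass G) / 2 -> G b = 0.
Proof.
  intros [b0 b1] mub.
  destruct HG as [G0 _].
  apply Rle_antisym; [| exact (early_profile_nonneg HG mu0 b)].
  destruct early_mass_le1 as [m_lt1 | m_eq1].
  2: { generalize (early_profile_gap HG b0); rewrite (mu0 0) by lra.
       rewrite m_eq1 in mub; lra. }
  apply Rnot_lt_le; intro Gb_pos.
  destruct (continuity_pt_left_close (mu_cont b) Gb_pos) as [x [xb mu_xb]].
  assert (Gx_pos : 0 < G x)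
    by (generalize (early_profile_gap HG (Rlt_le _ _ xb)); lra).
  assert (x0 : 0 <= x).
  { apply Rnot_lt_le; intro x_neg.
    generalize (early_profile_mono HG (Rlt_le _ _ x_neg)); lra. }
  destruct (contracts_early_between G (fun _ _ => early_profile_mono HG) 0 x x0)
    as [q [Hq q_early]]; [lra |].
  destruct Heq as [_ [cond1 cond2]].
  apply (cond2 m_lt1 b); [lra |].
  split.
  - generalize (Qhat_inv_mul mu G b m_lt1); unfold school_avg; nra.
  - generalize (proj2 (cond1 q q_early)); lra.
Qed.

Lemma all_early_below (c : R) :
  c <= 1 -> mu c = 1 - (1 - early_mass G) / 2 -> G c = early_mass G.
Proof.
  intros c1 muc.
  apply Rle_antisym; [exact (early_profile_mono HG c1) |].
  destruct early_mass_le1 as [m_lt1 | m_eq1].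
  2: { generalize (early_profile_gap HG c1); rewrite (mu1 1) by lra.
       unfold early_mass in *; rewrite m_eq1 in muc; lra. }
  apply Rnot_lt_le; intro Gc_lt.
  destruct (contracts_early_between G (fun _ _ => early_profile_mono HG)
              c 1 c1 Gc_lt) as [q [Hq q_early]].
  destruct Heq as [_ [cond1 _]].
  generalize (proj1 (cond1 q q_early)) (Qhat_inv_mul mu G q m_lt1).
  assert (cq : c <= q) by lra.
  generalize (early_profile_gap HG cq); unfold school_avg; nra.
Qed.

End Equilibrium.

Theorem mainTheorem11
  (mu QT G Qhat : R -> R) (pr : Riemann_integrable Qhat 0 1)
  (Hmu : is_job_cdf mu) (HQT : truthful_map mu QT)
  (HG : early_mass_profile mu G)
  (Heq : is_equilibrium mu G Qhat (RiemannInt pr)) :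
  exists a b c : R,
    0 <= a <= 1 / 2 /\ b = QT a /\ c = QT (1 - a) /\ b <= c /\
    (forall q, G q = mu (Rmax b (Rmin q c)) - mu b).
Proof.
  assert (m_nonneg : 0 <= early_mass G)
    by exact (early_profile_nonneg HG (proj1 Hmu) 1).
  pose proof (early_mass_le1 Hmu HG) as m_le1.
  set (m := early_mass G) in *.
  set (a := (1 - m) / 2).
  destruct (HQT a) as [b01 mub]; [unfold a; lra |].
  destruct (HQT (1 - a)) as [c01 muc]; [unfold a; lra |].
  set (b := QT a) in *; set (c := QT (1 - a)) in *.
  assert (bc : b <= c).
  { apply Rnot_lt_le; intro cb.
    (* c < b forces m = 0, i.e. a = 1 - a and hence b = c. *)
    generalize (early_profile_gap HG (Rlt_le _ _ cb)); rewrite mub, muc; intro gap.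
    assert (a_half : 1 - a = a) by (unfold a in *; lra).
    unfold c in cb; rewrite a_half in cb; fold b in cb; lra. }
  exists a, b, c; repeat split; try (unfold a; lra); try lra.
  apply (early_profile_interval HG (proj1 Hmu) (proj1 (proj2 Hmu))); try lra.
  - exact (no_early_below Hmu HG Heq b b01 mub).
  - apply (all_early_below Hmu HG Heq c (proj2 c01)); rewrite muc; unfold a, m; lra.
  - rewrite mub, muc; unfold a, m; lra.
Qed.
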